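(* Let $n\ge 3$. For a generic framed $n$-gon $(B_1,\dots,B_n;u_1,\dots,u_n)$ and each $i$, let $C_i$ be the unique circle passing through $B_{i-1}$ and $B_i$ and tangent to $u_{i-1}$ at $B_{i-1}$ and to $u_i$ at $B_i$, and orient the chain $(C_1,\dots,C_n)$ by the rotation of the circles given by the framing vectors. This defines a map $\mathcal F_n^\circ\to\mathcal C_n^\circ$ from generic framed $n$-gons to generic oriented chains of $n$ circles, and this map is a bijection.
   Context: Indices are mod $n$. For nonzero plane vectors $u,v$, $\angle(u,v)\in\mathbb{R}/2\pi\mathbb{Z}$ is the counterclockwise angle from $u$ to $v$. A framed $n$-gon is a tuple $(B_1,\dots,B_n;u_1,\dots,u_n)$ of points with $B_i\neq B_{i+1}$ and unit vectors $u_i$ with $\angle(u_i,B_{i+1}-B_i)=\angle(B_{i+1}-B_i,u_{i+1})$ for all $i$; $(u_i)$ and $(-u_i)$ are identified. A framed polygon is non-generic if for some $i$ the vectors $u_{i-1},u_i,u_{i+1}$ are tangent to the circle through $B_{i-1},B_i,B_{i+1}$; otherwise generic; $\mathcal F_n^\circ$ is the set of generic framed $n$-gons. An oriented chain of $n$ circles is a collection of circles $C_1,\dots,C_n$ with $C_i$ tangent to $C_{i+1}$ and $C_i\ne C_{i+1}$, with signs assigned to the circles so that externally tangent consecutive circles have opposite signs and internally tangent ones have equal signs, up to simultaneous change of all signs (equivalently, the circles can be rotated consistently like linked gears, circles of the same sign rotating in the same sense). A chain is non-generic if for some $i$ the tangency point of $C_{i-1}$ with $C_i$ coincides with the tangency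 point of $C_i$ with $C_{i+1}$; otherwise generic; $\mathcal C_n^\circ$ is the set of generic oriented chains. *)

From Stdlib Require Import Reals.
From mathcomp Require Import all_boot.

Set Implicit Arguments.
Unset Strict Implicit.
Unset Printing Implicit Defensive.

Local Open Scope R_scope.

Definition pt := (R * R)%type.
Definition vadd (a b : pt) : pt := (fst a + fst b, snd a + snd b).
Definition vsub (a b : pt) : pt := (fst a - fst b, snd a - snd b).
Definition vscale (k : R) (a : pt) : pt := (k * fst a, k * snd a).
Definition vneg (a : pt) : pt := (- fst a, - snd a).
Definition dot (a b : pt) : R := fst a * fst b + snd a * snd b.
Definition cross (a b : pt) : R := fst a * snd b - snd a * fst b.
Definition vnorm (a : pt) : R := sqrt (dot a a).
Definition is_unit (a : pt) : Prop := dot a a = 1.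
Definition normalize (a : pt) : pt := vscale (/ vnorm a) a.
Definition rot (t : R) (a : pt) : pt :=
  (cos t * fst a - sin t * snd a, sin t * fst a + cos t * snd a).
Definition rot90 (a : pt) : pt := (- snd a, fst a).

(* [angle_eq u v w z] : for nonzero u v w z, the counterclockwise angle
   from u to v equals (in R/2piZ) the counterclockwise angle from w to z,
   i.e. one and the same rotation takes the direction of u to that of v and
   the direction of w to that of z. *)
Definition angle_eq (u v w z : pt) : Prop :=
  exists t : R, rot t (normalize u) = normalize v /\
                rot t (normalize w) = normalize z.

Definition framed_polygon (n : nat) (B u : 'I_n -> pt) : Prop :=
  (forall i, B i <> B (ordS i)) /\
  (forall i, is_unit (u i)) /\
  (forall i, angle_eq (u i) (vsub (B (ordS i)) (B i))
                      (vsub (B (ordS i)) (B i)) (u (ordS i))).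

(* Oriented circle: center c, radius r > 0, and a sense of rotation
   (true = counterclockwise).  Oriented line: the line {p | <nrm,p> = h}
   with unit normal nrm; its direction of motion is rot90 nrm.
   These data are canonical: distinct data = distinct oriented objects. *)
Inductive ocirc : Type :=
  | OCircle (c : pt) (r : R) (ccw : bool)
  | OLine (nrm : pt) (h : R).

Definition valid (C : ocirc) : Prop :=
  match C with
  | OCircle _ r _ => 0 < r
  | OLine nrm _ => is_unit nrm
  end.

Definition on (C : ocirc) (p : pt) : Prop :=
  match C with
  | OCircle c r _ => vnorm (vsub p c) = r
  | OLine nrm h => dot nrm p = h
  end.

Definition otan (C : ocirc) (p : pt) : pt :=
  match C with
  | OCircle c r b =>
      let v := rot90 (vscale (/ r) (vsub p c)) in if b then v else vneg v
  | OLine nrm _ => rot90 nrm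
  end.

Definition orev (C : ocirc) : ocirc :=
  match C with
  | OCircle c r b => OCircle c r (~~ b)
  | OLine nrm h => OLine (vneg nrm) (- h)
  end.

Definition same_circle (C D : ocirc) : Prop := forall p, on C p <-> on D p.

Definition tangent_at (C : ocirc) (p u : pt) : Prop :=
  on C p /\ cross (otan C p) u = 0.

(* C and D are tangent at p and rotate compatibly there like linked gears:
   they pass through p with the same oriented tangent.  (For two circles this
   is: externally tangent <-> opposite senses, internally tangent <-> same
   sense.) *)
Definition gear_tangent_at (C D : ocirc) (p : pt) : Prop :=
  on C p /\ on D p /\ otan C p = otan D p.

Definition oriented_chain (n : nat) (C : 'I_n -> ocirc) : Prop :=
  forall i, valid (C i) /\ ~ same_circle (C i) (C (ordS i)) /\
            exists p, gear_tangent_at (C i) (C (ordS i)) p.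

Definition generic_chain (n : nat) (C : 'I_n -> ocirc) : Prop :=
  oriented_chain C /\
  forall i p q, gear_tangent_at (C (ord_pred i)) (C i) p ->
                gear_tangent_at (C i) (C (ordS i)) q -> p <> q.

Definition chain_equiv (n : nat) (C D : 'I_n -> ocirc) : Prop :=
  (forall i, D i = C i) \/ (forall i, D i = orev (C i)).

Definition nongeneric_framed (n : nat) (B u : 'I_n -> pt) : Prop :=
  exists i, exists D, valid D /\
    tangent_at D (B (ord_pred i)) (u (ord_pred i)) /\
    tangent_at D (B i) (u i) /\
    tangent_at D (B (ordS i)) (u (ordS i)).

Definition generic_framed (n : nat) (B u : 'I_n -> pt) : Prop :=
  framed_polygon B u /\ ~ nongeneric_framed B u.

Definition frame_equiv (n : nat) (u v : 'I_n -> pt) : Prop :=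
  (forall i, v i = u i) \/ (forall i, v i = vneg (u i)).

Definition induced_chain (n : nat) (B u : 'I_n -> pt) (C : 'I_n -> ocirc) : Prop :=
  forall i, valid (C i) /\
    tangent_at (C i) (B (ord_pred i)) (u (ord_pred i)) /\
    tangent_at (C i) (B i) (u i) /\
    otan (C i) (B (ord_pred i)) = u (ord_pred i) /\
    otan (C i) (B i) = u i.

From Pilot Require Import Defs.
From Stdlib Require Import Reals Lra Psatz Classical ClassicalEpsilon.
From mathcomp Require Import all_boot.

(* Through two distinct points P, Q and a unit vector u at P passes exactly one
   generalized circle tangent to u at P; its oriented tangent at Q is the mirror
   image of u in the chord PQ, which is exactly the equal-angle condition of a
   framed polygon.  Hence a framed polygon determines its circles, and
   conversely the tangency points of a chain, framed by the common oriented
   tangents, form a framed polygon inducing that chain.  A framed polygon is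
   non-generic precisely when two consecutive circles coincide, and consecutive
   circles that are distinct meet at a single point, which gives injectivity. *)

Set Implicit Arguments.
Unset Strict Implicit.

Local Open Scope R_scope.

Lemma dot_ge0 a : 0 <= dot a a.
Proof. by rewrite /dot; nra. Qed.

Lemma vnorm_sq a : vnorm a * vnorm a = dot a a.
Proof. exact: sqrt_sqrt (dot_ge0 a). Qed.

Lemma vnorm_eq a r : 0 <= r -> dot a a = r * r -> vnorm a = r.
Proof. by move=> Hr H; rewrite /vnorm H sqrt_square. Qed.

Lemma dot_sub_gt0 (p q : pt) : p <> q -> 0 < dot (vsub q p) (vsub q p).
Proof.
  case: p q => [p1 p2] [q1 q2]; rewrite /dot /vsub /= => Hpq.
  case: (Req_dec q1 p1) => [E1|]; case: (Req_dec q2 p2) => [E2|]; try nra.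
  by case: Hpq; rewrite E1 E2.
Qed.

Lemma cross_self a : cross a a = 0.
Proof. by rewrite /cross; ring. Qed.

Lemma crossC a b : cross a b = - cross b a.
Proof. by rewrite /cross; ring. Qed.

Lemma cross_vneg a b : cross (vneg a) (vneg b) = cross a b.
Proof. by rewrite /cross /vneg /=; ring. Qed.

Lemma cross_vnegr a b : cross a (vneg b) = - cross a b.
Proof. by rewrite /cross /vneg /=; ring. Qed.

Lemma cross_scale_rot90 k l a b :
  cross (vscale k (rot90 a)) (vscale l (rot90 b)) = k * l * cross a b.
Proof. by rewrite /cross /vscale /rot90 /=; ring. Qed.

Lemma vneg_inj a b : vneg a = vneg b -> a = b.
Proof. by case: a b => [a1 a2] [b1 b2] [E1 E2]; f_equal; lra. Qed.

Lemma normalize_unit u : is_unit u -> normalize u = u.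
Proof.
  move=> Hu; rewrite /normalize /vnorm Hu sqrt_1; case: u {Hu} => u1 u2.
  by rewrite /vscale /=; f_equal; field.
Qed.

Lemma normalize_is_unit a : 0 < dot a a -> is_unit (normalize a).
Proof.
  move=> Ha; have Lsq := vnorm_sq a.
  have Lpos : 0 < vnorm a by apply sqrt_lt_R0.
  rewrite /is_unit /normalize; move: Lsq Lpos; set L := vnorm a; clearbody L.
  destruct a as [a1 a2]; rewrite /dot /vscale /= => Lsq Lpos.
  transitivity ((a1 * a1 + a2 * a2) / (L * L)); [field; lra|].
  rewrite /dot /= in Lsq; rewrite -Lsq; field; lra.
Qed.

Lemma unit_parallel n m : is_unit n -> is_unit m -> cross n m = 0 ->
  m = n \/ m = vneg n.
Proof.
  case: n m => [n1 n2] [m1 m2]; rewrite /is_unit /dot /cross /vneg /= => Hn Hm Hx.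
  set l := m1 * n1 + m2 * n2.
  have M1 : m1 = l * n1.
    transitivity (m1 * (n1 * n1 + n2 * n2) + n2 * (n1 * m2 - n2 * m1));
      [rewrite Hn Hx; ring | rewrite /l; ring].
  have M2 : m2 = l * n2.
    transitivity (m2 * (n1 * n1 + n2 * n2) - n1 * (n1 * m2 - n2 * m1));
      [rewrite Hn Hx; ring | rewrite /l; ring].
  have : l * l = 1.
    rewrite M1 M2 in Hm; rewrite -Hm -[l * l]Rmult_1_r -Hn; ring.
  clearbody l => Hl; rewrite M1 M2.
  have [->| ->] : l = 1 \/ l = -1 by nra.
  - left; f_equal; ring.
  - right; f_equal; ring.
Qed.

Definition mirror (d u : pt) : pt := vsub (vscale (2 * dot u d / dot d d) d) u.

Lemma mirror_scale k d u : k <> 0 -> 0 < dot d d -> mirror (vscale k d) u = mirror d u.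
Proof.
  destruct d as [d1 d2], u as [u1 u2]; rewrite /mirror /dot /vscale /vsub /= => Hk Hd.
  have Hkk : 0 < k * k by apply: Rsqr_pos_lt.
  have Hkd : k * d1 * (k * d1) + k * d2 * (k * d2) <> 0 by nra.
  f_equal; field; lra.
Qed.

Lemma cos_sin_exists c s : c * c + s * s = 1 -> exists t, cos t = c /\ sin t = s.
Proof.
  move=> H; have Hc : -1 <= c <= 1 by split; nra.
  have Hs : sqrt (1 - c²) = Rabs s by rewrite -sqrt_Rsqr_abs; f_equal; rewrite /Rsqr; lra.
  case: (Rle_or_lt 0 s) => Hs0.
  - exists (acos c); rewrite cos_acos // sin_acos // Hs Rabs_right; lra.
  - exists (- acos c); rewrite cos_neg sin_neg cos_acos // sin_acos // Hs Rabs_left; lra.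
Qed.

Lemma rot_unit_exists x y : is_unit x -> is_unit y -> exists t, Defs.rot t x = y.
Proof.
  destruct x as [x1 x2], y as [y1 y2]; rewrite /is_unit /dot /= => Hx Hy.
  have Hcs : (x1 * y1 + x2 * y2) * (x1 * y1 + x2 * y2)
           + (x1 * y2 - x2 * y1) * (x1 * y2 - x2 * y1) = 1.
    transitivity ((x1 * x1 + x2 * x2) * (y1 * y1 + y2 * y2)); [ring | rewrite Hx Hy; ring].
  have [t [Hc Hs]] := cos_sin_exists Hcs.
  exists t; rewrite /Defs.rot /= Hc Hs; f_equal.
  - transitivity (y1 * (x1 * x1 + x2 * x2)); [ring | rewrite Hx; ring].
  - transitivity (y2 * (x1 * x1 + x2 * x2)); [ring | rewrite Hx; ring].
Qed.

Lemma rot_twice_mirror t u e : is_unit u -> Defs.rot t u = e -> Defs.rot t e = mirror e u.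
Proof.
  have Hcs := sin2_cos2 t; rewrite /Rsqr in Hcs.
  destruct u as [u1 u2]; rewrite /is_unit /dot /Defs.rot /mirror /vscale /vsub /= => Hu <-.
  set c := cos t in Hcs *; set s := sin t in Hcs *; clearbody c s.
  have Hee : (c * u1 - s * u2) * (c * u1 - s * u2) + (s * u1 + c * u2) * (s * u1 + c * u2) = 1.
    transitivity ((s * s + c * c) * (u1 * u1 + u2 * u2)); [ring | rewrite Hcs Hu; ring].
  have Hue : u1 * (c * u1 - s * u2) + u2 * (s * u1 + c * u2) = c.
    by transitivity (c * (u1 * u1 + u2 * u2)); [ring | rewrite Hu; ring].
  rewrite /dot /= Hee Hue; f_equal; nra.
Qed.

Lemma angle_eq_mirror u d v : is_unit u -> is_unit v -> 0 < dot d d ->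
  angle_eq u d d v <-> v = mirror d u.
Proof.
  move=> Hu Hv Hd; rewrite /angle_eq (normalize_unit Hu) (normalize_unit Hv).
  have He := normalize_is_unit Hd.
  have Hmir : mirror (normalize d) u = mirror d u.
    apply: mirror_scale => //; apply/Rinv_neq_0_compat/Rgt_not_eq/sqrt_lt_R0/Hd.
  split.
  - by move=> [t [Ht1 Ht2]]; rewrite -Ht2 -Hmir; apply: rot_twice_mirror.
  - move=> ->; have [t Ht] := rot_unit_exists Hu He.
    by exists t; split; [|rewrite -Hmir; apply: rot_twice_mirror].
Qed.

Lemma on_circle_iff c r b p : 0 <= r ->
  on (OCircle c r b) p <-> dot (vsub p c) (vsub p c) = r * r.
Proof.
  move=> Hr /=; split; first by move=> <-; rewrite vnorm_sq.
  exact: vnorm_eq.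
Qed.

Lemma on_orev C p : on (orev C) p <-> on C p.
Proof. by case: C => [c r b|[n1 n2] h] //=; rewrite /dot /=; split; lra. Qed.

Lemma otan_orev C p : otan (orev C) p = vneg (otan C p).
Proof.
  case: C => [c r [] |[n1 n2] h] /=; rewrite /vneg /rot90 //=.
  by rewrite !Ropp_involutive.
Qed.

Lemma valid_orev C : valid C -> valid (orev C).
Proof. by case: C => [c r b|[n1 n2] h] //=; rewrite /is_unit /dot /=; lra. Qed.

Lemma otan_unit C p : valid C -> on C p -> is_unit (otan C p).
Proof.
  case: C => [[c1 c2] r b|[n1 n2] h]; last by rewrite /= /is_unit /dot /=; lra.
  move=> Hr; rewrite on_circle_iff; last exact: Rlt_le.
  rewrite /= in Hr; destruct p as [p1 p2]; rewrite /is_unit /dot /vsub /= => Hp.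
  have E x y : x * x + y * y = ((p1 - c1) * (p1 - c1) + (p2 - c2) * (p2 - c2)) / (r * r) ->
    x * x + y * y = 1 by move=> ->; rewrite Hp; field; lra.
  case: b; apply: E; rewrite /rot90 /vscale /vneg /=; field; lra.
Qed.

Definition normal (C : ocirc) (p : pt) : pt :=
  match C with
  | OCircle c _ _ => vsub p c
  | OLine nrm _ => nrm
  end.

Lemma otan_normal C p : valid C ->
  exists k, k <> 0 /\ otan C p = vscale k (rot90 (normal C p)).
Proof.
  case: C => [[c1 c2] r b|[n1 n2] h] /= Hv.
  - have Hr : / r <> 0 by apply: Rinv_neq_0_compat; lra.
    case: b; [exists (/ r) | exists (- / r)]; split; try lra;
      rewrite /vneg /vscale /rot90 /=; f_equal; ring.
  - by exists 1; split; [lra | rewrite /vscale /rot90 /=; f_equal; ring].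
Qed.

Lemma cross_otan_normal C D p : valid C -> valid D ->
  cross (otan C p) (otan D p) = 0 -> cross (normal C p) (normal D p) = 0.
Proof.
  move=> /(otan_normal p) [k [Hk ->]] /(otan_normal p) [l [Hl ->]].
  rewrite cross_scale_rot90 => /Rmult_integral [|//].
  by move=> /Rmult_integral [].
Qed.

Lemma on_circle_offset c r b v : 0 <= r -> dot v v = r * r -> on (OCircle c r b) (vadd c v).
Proof.
  move=> Hr Hv; rewrite on_circle_iff // -Hv.
  by destruct c, v; rewrite /dot /vadd /vsub /=; ring.
Qed.

Lemma circle_axis_points c r b (P : pt -> Prop) : 0 <= r ->
  (forall p, on (OCircle c r b) p -> P p) ->
  [/\ P (vadd c (r, 0)), P (vadd c (- r, 0)), P (vadd c (0, r)) & P (vadd c (0, - r))].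
Proof.
  move=> Hr HP; split; apply/HP/on_circle_offset => //; rewrite /dot /=; ring.
Qed.

Lemma same_circle_circle c d r s b b' : 0 < r ->
  same_circle (OCircle c r b) (OCircle d s b') -> d = c /\ s = r.
Proof.
  move=> Hr HS.
  have [] := circle_axis_points (Rlt_le _ _ Hr) (fun p => proj1 (HS p)).
  move=> E1; have Hs : 0 <= s by move: E1 => /= <-; apply: sqrt_pos.
  move: E1; rewrite !on_circle_iff //.
  destruct c as [c1 c2], d as [d1 d2]; rewrite /dot /vadd /vsub /= => E1 E2 E3 E4.
  have Ec1 : c1 = d1 by nra.
  have Ec2 : c2 = d2 by nra.
  subst; split => //; nra.
Qed.

Lemma circle_line_not_same c r b n h : 0 < r -> is_unit n ->
  ~ same_circle (OCircle c r b) (OLine n h).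
Proof.
  move=> Hr Hn HS.
  have [] := circle_axis_points (Rlt_le _ _ Hr) (fun p => proj1 (HS p)).
  destruct c as [c1 c2], n as [n1 n2] => /= E1 E2 E3 E4.
  rewrite /is_unit /dot /= in Hn E1 E2 E3 E4.
  have Hn1 : n1 = 0 by nra.
  have Hn2 : n2 = 0 by nra.
  by subst; lra.
Qed.

Lemma dot_scale_unit n h : is_unit n -> dot n (vscale h n) = h.
Proof.
  move=> Hn; transitivity (h * dot n n); last by rewrite [dot n n]Hn; ring.
  by destruct n; rewrite /dot /vscale /=; ring.
Qed.

Lemma same_line_line n m h k : is_unit n -> is_unit m ->
  same_circle (OLine n h) (OLine m k) -> OLine m k = OLine n h \/ OLine m k = orev (OLine n h).
Proof.
  move=> Hn Hm HS.
  have Hk : dot m (vscale h n) = k by apply: (proj1 (HS _)); exact: dot_scale_unit.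
  have Hk' : dot m (vadd (vscale h n) (rot90 n)) = k.
    apply: (proj1 (HS _)); rewrite /= -[RHS](dot_scale_unit h Hn).
    by destruct n; rewrite /dot /vadd /vscale /rot90 /=; ring.
  have Hx : cross n m = 0.
    by move: Hk Hk'; destruct n, m; rewrite /dot /vadd /vscale /rot90 /cross /=; lra.
  have [Em | Em] := unit_parallel Hn Hm Hx; rewrite -Hk Em; [left | right].
  - by rewrite dot_scale_unit.
  - have -> : dot (vneg n) (vscale h n) = - dot n (vscale h n).
      by destruct n; rewrite /dot /vneg /vscale /=; ring.
    by rewrite dot_scale_unit.
Qed.

Lemma same_circle_orev C D : valid C -> valid D -> same_circle C D -> D = C \/ D = orev C.
Proof.
  case: C => [c r b|n h]; case: D => [d s b'|m k] /= HC HD HS.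
  - have [-> ->] := same_circle_circle HC HS.
    by clear HS; case: b; case: b'; [left | right | right | left].
  - by case: (circle_line_not_same HC HD HS).
  - by case: (circle_line_not_same HD HC (fun p => iff_sym (HS p))).
  - exact: same_line_line.
Qed.

Lemma otan_same_circle C D p : valid C -> valid D -> same_circle C D -> on C p ->
  otan C p = otan D p -> forall q, otan C q = otan D q.
Proof.
  move=> HC HD HS Hp; have [-> //|->] := same_circle_orev HC HD HS.
  rewrite otan_orev; have := otan_unit HC Hp.
  by case: (otan C p) => x y; rewrite /is_unit /vneg /dot /= => U [] *; nra.
Qed.

Lemma cross_otan_same_circle C D p : valid C -> valid D -> same_circle C D ->
  cross (otan C p) (otan D p) = 0.
Proof.
  move=> HC HD HS; have [->|->] := same_circle_orev HC HD HS.
  - exact: cross_self.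
  - by rewrite otan_orev cross_vnegr cross_self Ropp_0.
Qed.

Lemma dot_eq0 e : dot e e = 0 -> e = (0, 0).
Proof.
  destruct e as [e1 e2]; rewrite /dot /= => He.
  have E1 : e1 = 0 by nra.
  have E2 : e2 = 0 by nra.
  by rewrite E1 E2.
Qed.

(* With [w = q - p] a chord and [a = p - c] the radius at [p], the hypotheses say
   that [e] is orthogonal to the chord and parallel to the radius. *)
Lemma chord_normal_eq0 w a e : 0 < dot w w -> dot w w + 2 * dot w a = 0 ->
  dot w e = 0 -> cross a e = 0 -> dot e e = 0.
Proof.
  move=> Hw Hchord Hwe Hae.
  have Lag : dot w a * dot e e = dot w e * dot a e + cross w e * cross a e.
    by destruct w, a, e; rewrite /dot /cross /=; ring.
  rewrite Hwe Hae !Rmult_0_l Rmult_0_r Rplus_0_r in Lag.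
  case/Rmult_integral: Lag => // Hwa; lra.
Qed.

Lemma chord_identity p q c :
  dot (vsub q p) (vsub q p) + 2 * dot (vsub q p) (vsub p c)
  = dot (vsub q c) (vsub q c) - dot (vsub p c) (vsub p c).
Proof. by destruct p, q, c; rewrite /dot /vsub /=; ring. Qed.

Lemma tangent_chord_circles c d r s b b' p q : 0 < r -> 0 < s -> p <> q ->
  on (OCircle c r b) p -> on (OCircle d s b') p ->
  on (OCircle c r b) q -> on (OCircle d s b') q ->
  cross (vsub p c) (vsub p d) = 0 -> same_circle (OCircle c r b) (OCircle d s b').
Proof.
  move=> Hr Hs Hpq; rewrite !on_circle_iff; try lra.
  move=> Hpc Hpd Hqc Hqd Hx.
  have Hcd : dot (vsub d c) (vsub d c) = 0.
    apply: (@chord_normal_eq0 (vsub q p) (vsub p c)).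
    - exact: dot_sub_gt0.
    - by rewrite chord_identity Hpc Hqc; ring.
    - have := chord_identity p q c; have := chord_identity p q d.
      rewrite Hpc Hqc Hpd Hqd.
      by destruct p, q, c, d; rewrite /dot /vsub /=; lra.
    - by move: Hx; destruct p, c, d; rewrite /cross /vsub /=; lra.
  have Edc : d = c.
    by move/dot_eq0: Hcd; destruct c, d; rewrite /vsub /= => [[E1 E2]]; f_equal; lra.
  subst d; have -> : s = r by rewrite Hpc in Hpd; nra.
  by move=> x.
Qed.

Lemma tangent_chord_circle_line c r b n h p q : 0 < r -> is_unit n -> p <> q ->
  on (OCircle c r b) p -> on (OLine n h) p -> on (OCircle c r b) q -> on (OLine n h) q ->
  cross (vsub p c) n <> 0.
Proof.
  move=> Hr Hn Hpq; rewrite !on_circle_iff; try lra.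
  move=> Hpc /= Hpn Hqc Hqn Hx.
  suff : dot n n = 0 by rewrite [dot n n]Hn; lra.
  apply: (@chord_normal_eq0 (vsub q p) (vsub p c)) => //.
  - exact: dot_sub_gt0.
  - by rewrite chord_identity Hpc Hqc; ring.
  - by move: Hpn Hqn; destruct p, q, n; rewrite /dot /vsub /=; lra.
Qed.

Lemma tangent_lines n m h k p : is_unit n -> is_unit m ->
  on (OLine n h) p -> on (OLine m k) p -> cross n m = 0 -> same_circle (OLine n h) (OLine m k).
Proof.
  move=> Hn Hm /= <- <- /(unit_parallel Hn Hm) [->|->] x //=.
  by destruct n, p, x; rewrite /dot /vneg /=; split; lra.
Qed.

Lemma same_circle_of_tangent_chord C D p q : valid C -> valid D -> p <> q ->
  on C p -> on D p -> on C q -> on D q -> cross (otan C p) (otan D p) = 0 ->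
  same_circle C D.
Proof.
  move=> HC HD Hpq Hp Hp' Hq Hq' /(cross_otan_normal HC HD).
  case: C HC Hp Hq => [c r b|n h] HC Hp Hq; case: D HD Hp' Hq' => [d s b'|m k] HD Hp' Hq'.
  - exact: (tangent_chord_circles HC HD Hpq Hp Hp' Hq Hq').
  - by move/(tangent_chord_circle_line HC HD Hpq Hp Hp' Hq Hq').
  - rewrite crossC => Hx; exfalso.
    apply: (tangent_chord_circle_line HD HC Hpq Hp' Hp Hq' Hq).
    by move/Ropp_eq_0_compat: Hx; rewrite Ropp_involutive.
  - exact: (tangent_lines HC HD Hp Hp').
Qed.

(* The centre lies on the normal [P + s rot90 u]; equidistance from [P] and [Q]
   forces [s = |Q - P|^2 / (2 (Q - P).rot90 u)], and the circle degenerates to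
   the tangent line when that denominator vanishes. *)
Definition tangent_circle (P u Q : pt) : ocirc :=
  let d := vsub Q P in
  let k := dot d (rot90 u) in
  if Req_EM_T k 0 then OLine (vneg (rot90 u)) (dot (vneg (rot90 u)) P)
  else let s := dot d d / (2 * k) in
       OCircle (vadd P (vscale s (rot90 u))) (Rabs s) (if Rlt_dec 0 s then true else false).

Lemma otan_signed_circle c s p : s <> 0 ->
  otan (OCircle c (Rabs s) (if Rlt_dec 0 s then true else false)) p
  = vscale (/ s) (rot90 (vsub p c)).
Proof.
  move=> Hs; case: Rlt_dec => Hs0 /=.
  - rewrite Rabs_pos_eq; last lra.
    by destruct p, c; rewrite /vscale /rot90 /vsub /=; f_equal; ring.
  - rewrite Rabs_left; last lra.
    by destruct p, c; rewrite /vscale /rot90 /vsub /vneg /=; f_equal; field.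
Qed.

Lemma mirror_parallel d u : 0 < dot d d -> dot d (rot90 u) = 0 -> mirror d u = u.
Proof.
  destruct d as [d1 d2], u as [u1 u2]; rewrite /mirror /dot /rot90 /vscale /vsub /= => Hd Hk.
  have Hpar1 : (u1 * d1 + u2 * d2) * d1 = (d1 * d1 + d2 * d2) * u1.
    by transitivity ((d1 * d1 + d2 * d2) * u1 - d2 * (d1 * - u2 + d2 * u1)); [ring | rewrite Hk; ring].
  have Hpar2 : (u1 * d1 + u2 * d2) * d2 = (d1 * d1 + d2 * d2) * u2.
    by transitivity ((d1 * d1 + d2 * d2) * u2 + d1 * (d1 * - u2 + d2 * u1)); [ring | rewrite Hk; ring].
  f_equal.
  - transitivity (2 * ((u1 * d1 + u2 * d2) * d1) / (d1 * d1 + d2 * d2) - u1); first by field; lra.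
    by rewrite Hpar1; field; lra.
  - transitivity (2 * ((u1 * d1 + u2 * d2) * d2) / (d1 * d1 + d2 * d2) - u2); first by field; lra.
    by rewrite Hpar2; field; lra.
Qed.

Lemma tangent_line_spec P u Q (T := OLine (vneg (rot90 u)) (dot (vneg (rot90 u)) P)) :
  is_unit u -> 0 < dot (vsub Q P) (vsub Q P) -> dot (vsub Q P) (rot90 u) = 0 ->
  [/\ valid T, on T P, on T Q, otan T P = u & otan T Q = mirror (vsub Q P) u].
Proof.
  move=> Hu Hd Hk; rewrite mirror_parallel //.
  have Hrot : rot90 (vneg (rot90 u)) = u by destruct u; rewrite /rot90 /vneg /= !Ropp_involutive.
  split => //.
  - by move: Hu; destruct u; rewrite /= /is_unit /dot /=; lra.
  - by move: Hk; destruct P, Q, u; rewrite /= /dot /vsub /vneg /=; lra.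
Qed.

Lemma tangent_arc_spec P u Q (d := vsub Q P) (s := dot d d / (2 * dot d (rot90 u)))
  (T := OCircle (vadd P (vscale s (rot90 u))) (Rabs s) (if Rlt_dec 0 s then true else false)) :
  is_unit u -> 0 < dot d d -> dot d (rot90 u) <> 0 ->
  [/\ valid T, on T P, on T Q, otan T P = u & otan T Q = mirror d u].
Proof.
  move=> Hu Hd Hk.
  have Hs : s <> 0.
    by apply: Rmult_integral_contrapositive; split; [lra | apply/Rinv_neq_0_compat; lra].
  have Hsk : s * (2 * dot d (rot90 u)) = dot d d by rewrite /s; field.
  have Hss : Rabs s * Rabs s = s * s by rewrite -Rabs_mult Rabs_right //; nra.
  rewrite /T !otan_signed_circle //; split; first exact: Rabs_pos_lt.
  - rewrite on_circle_iff ?Hss; last exact: Rabs_pos.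
    transitivity (s * s * dot u u); last by rewrite [dot u u]Hu; ring.
    by destruct P, u; rewrite /dot /vsub /vadd /vscale /rot90 /=; ring.
  - rewrite on_circle_iff ?Hss; last exact: Rabs_pos.
    transitivity (dot d d - s * (2 * dot d (rot90 u)) + s * s * dot u u).
      by rewrite /d; destruct P, Q, u; rewrite /dot /vsub /vadd /vscale /rot90 /=; ring.
    by rewrite Hsk [dot u u]Hu; ring.
  - by destruct P, u; rewrite /vscale /vsub /vadd /rot90 /=; f_equal; field.
  - rewrite /s /mirror; rewrite /d in Hd Hk *; move: Hd Hk.
    destruct P, Q, u; rewrite /dot /vsub /vadd /vscale /rot90 /= => Hd Hk.
    by f_equal; field; lra.
Qed.

Lemma tangent_circle_spec P u Q (T := tangent_circle P u Q) : is_unit u -> P <> Q ->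
  [/\ valid T, on T P, on T Q, otan T P = u & otan T Q = mirror (vsub Q P) u].
Proof.
  move=> Hu /dot_sub_gt0 Hd; rewrite /T /tangent_circle.
  case: Req_EM_T => Hk; [exact: tangent_line_spec | exact: tangent_arc_spec].
Qed.

Lemma otan_chord_mirror C p q : valid C -> on C p -> on C q -> p <> q ->
  otan C q = mirror (vsub q p) (otan C p).
Proof.
  move=> HC Hp Hq Hpq.
  have [HT HTp HTq HTtp HTtq] := tangent_circle_spec (otan_unit HC Hp) Hpq.
  have HS : same_circle C (tangent_circle p (otan C p) q).
    by apply: (same_circle_of_tangent_chord HC HT Hpq) => //; rewrite HTtp cross_self.
  by rewrite (otan_same_circle HC HT HS Hp (esym HTtp)).
Qed.

Lemma angle_eq_otan C p q : valid C -> on C p -> on C q -> p <> q ->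
  angle_eq (otan C p) (vsub q p) (vsub q p) (otan C q).
Proof.
  move=> HC Hp Hq Hpq.
  apply/(angle_eq_mirror (otan_unit HC Hp) (otan_unit HC Hq) (dot_sub_gt0 Hpq)).
  exact: otan_chord_mirror.
Qed.

Section FramedPolygon.

Variables (n : nat) (B u : 'I_n -> pt).
Hypothesis HF : framed_polygon B u.

Lemma framed_pred_neq i : B (ord_pred i) <> B i.
Proof. by have [HB _] := HF; have := HB (ord_pred i); rewrite ord_predK. Qed.

Lemma framed_mirror i : u i = mirror (vsub (B i) (B (ord_pred i))) (u (ord_pred i)).
Proof.
  have [_ [Hu Ha]] := HF; have := Ha (ord_pred i); rewrite ord_predK.
  by move/(angle_eq_mirror (Hu _) (Hu _) (dot_sub_gt0 (@framed_pred_neq i))).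
Qed.

Lemma induced_chain_tangent_circle :
  induced_chain B u (fun i => tangent_circle (B (ord_pred i)) (u (ord_pred i)) (B i)).
Proof.
  move=> i; have [_ [Hu _]] := HF.
  have [HT HTp HTq HTtp HTtq] := tangent_circle_spec (Hu (ord_pred i)) (@framed_pred_neq i).
  rewrite -framed_mirror in HTtq.
  by do !split => //; rewrite ?HTtp ?HTtq cross_self.
Qed.

End FramedPolygon.

Section InducedChain.

Variables (n : nat) (B u : 'I_n -> pt) (C : 'I_n -> ocirc).
Hypothesis HI : induced_chain B u C.

Lemma induced_gear_tangent i : gear_tangent_at (C i) (C (ordS i)) (B i).
Proof.
  have [_ [_ [[Hon _] [_ Htan]]]] := HI i.
  have [_ [[Hon' _] [_ [Htan' _]]]] := HI (ordS i); rewrite ordSK in Hon' Htan'.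
  by split; [|split; [|rewrite Htan Htan']].
Qed.

Hypothesis HF : framed_polygon B u.

Lemma induced_same_circle i D : valid D ->
  tangent_at D (B (ord_pred i)) (u (ord_pred i)) -> tangent_at D (B i) (u i) ->
  same_circle D (C i).
Proof.
  move=> HD [Hp Hxp] [Hq _]; have [HC [[HCp _] [[HCq _] [Htan _]]]] := HI i.
  apply: (same_circle_of_tangent_chord HD HC (framed_pred_neq HF (i:=i))) => //.
  by rewrite Htan.
Qed.

Lemma not_nongeneric_iff :
  ~ nongeneric_framed B u <-> forall i, ~ same_circle (C i) (C (ordS i)).
Proof.
  split.
  - move=> Hgen i HS; apply: Hgen; exists i, (C i).
    have [HC [Hp [Hq _]]] := HI i.
    have [HC' [_ [[Hr _] [_ Hrtan]]]] := HI (ordS i).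
    do !split => //; first by apply/HS.
    by rewrite -Hrtan; exact: cross_otan_same_circle.
  - move=> Hdist [i [D [HD [Hp [Hq Hr]]]]]; apply: (Hdist i) => x.
    have S1 := induced_same_circle HD Hp Hq.
    have S2 : same_circle D (C (ordS i)) by apply: induced_same_circle; rewrite ?ordSK.
    by rewrite -S1 S2.
Qed.

Lemma induced_gear_point_unique i p : (forall i, ~ same_circle (C i) (C (ordS i))) ->
  gear_tangent_at (C i) (C (ordS i)) p -> p = B i.
Proof.
  move=> Hdist [Hp [Hp' Htan]]; apply: NNPP => Hne; apply: (Hdist i).
  have [Hb [Hb' _]] := induced_gear_tangent i.
  have [HC _] := HI i; have [HC' _] := HI (ordS i).
  apply: (same_circle_of_tangent_chord HC HC' Hne) => //.
  by rewrite Htan cross_self.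
Qed.

End InducedChain.

Section GenericFramed.

Variables (n : nat) (B u : 'I_n -> pt).
Hypothesis HG : generic_framed B u.

Lemma generic_framed_induced_chain : exists C,
  induced_chain B u C /\ generic_chain C /\
  (forall i D, valid D -> tangent_at D (B (ord_pred i)) (u (ord_pred i)) ->
     tangent_at D (B i) (u i) -> same_circle D (C i)).
Proof.
  have [HF Hgen] := HG.
  have [C HI] : exists C, induced_chain B u C := ex_intro _ _ (induced_chain_tangent_circle HF).
  have Hdist := proj1 (not_nongeneric_iff HI HF) Hgen.
  exists C; split; first exact: HI; split; last exact: induced_same_circle.
  split=> [i | i p q Hp Hq].
  - by split; [case: (HI i) | split; [exact: Hdist | exists (B i); exact: induced_gear_tangent]].
  - move: Hp; rewrite -{2}(ord_predK i) => /(induced_gear_point_unique HI Hdist) ->.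
    rewrite (induced_gear_point_unique HI Hdist Hq).
    by have := framed_pred_neq HF (i:=i).
Qed.

End GenericFramed.

Lemma induced_chain_vneg n (B u : 'I_n -> pt) C : induced_chain B u C ->
  induced_chain B (fun i => vneg (u i)) (fun i => orev (C i)).
Proof.
  move=> HI i; have [HC [[Hp Hxp] [[Hq Hxq] [Htp Htq]]]] := HI i.
  rewrite /tangent_at !on_orev !otan_orev !cross_vneg Htp Htq.
  by do !split => //; [exact: valid_orev | exact: cross_self | exact: cross_self].
Qed.

Lemma induced_chain_inj n (B u B' u' : 'I_n -> pt) C C' :
  generic_framed B u -> induced_chain B u C -> induced_chain B' u' C' -> chain_equiv C C' ->
  (forall i, B' i = B i) /\ frame_equiv u u'.
Proof.
  move=> [HF Hgen] HI HI' HE.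
  have Hdist := proj1 (not_nongeneric_iff HI HF) Hgen.
  have HBB i : B' i = B i.
    apply: (induced_gear_point_unique HI Hdist).
    have [Hp [Hp' Htan]] := induced_gear_tangent HI' i.
    case: HE => HE; rewrite !HE ?otan_orev in Hp Hp' Htan; first by [].
    by move: Hp Hp' => /on_orev Hp /on_orev Hp'; split; [|split; [|exact: vneg_inj]].
  split=> //; case: HE => HE; [left | right] => i;
    have [_ [_ [_ [_ <-]]]] := HI' i; have [_ [_ [_ [_ <-]]]] := HI i;
    by rewrite HE HBB ?otan_orev.
Qed.

Lemma generic_chain_tangency_points n (C : 'I_n -> ocirc) : generic_chain C ->
  exists B : 'I_n -> pt, forall i, gear_tangent_at (C i) (C (ordS i)) (B i).
Proof.
  move=> [HC _].
  exists (fun i => proj1_sig (constructive_indefinite_description _ (proj2 (proj2 (HC i))))).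
  by move=> i; case: constructive_indefinite_description.
Qed.

Lemma generic_chain_induced n (C : 'I_n -> ocirc) : generic_chain C ->
  exists B u : 'I_n -> pt, generic_framed B u /\ induced_chain B u C.
Proof.
  move=> HG; have [HC Hgen] := HG; have [B HB] := generic_chain_tangency_points HG.
  have HBneq i : B i <> B (ordS i).
    by have := Hgen (ordS i) (B i) (B (ordS i)); rewrite ordSK; apply; apply: HB.
  have Hval i : valid (C i) by case: (HC i).
  exists B, (fun i => otan (C i) (B i)).
  have HF : framed_polygon B (fun i => otan (C i) (B i)).
    split=> [//|]; split=> i; first by apply: otan_unit; case: (HB i).
    have [_ [Hon Htan]] := HB i; have [Hon' _] := HB (ordS i).
    by rewrite Htan; apply: angle_eq_otan.
  have HI : induced_chain B (fun i => otan (C i) (B i)) C.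
    move=> i; have [Hon [_ _]] := HB i.
    have := HB (ord_pred i); rewrite ord_predK => -[Hpon [Hpon' Hptan]].
    by rewrite Hptan; do !split => //; apply: cross_self.
  split=> //; split=> //.
  by apply/(not_nongeneric_iff HI HF) => i; case: (HC i) => _ [].
Qed.

Theorem proposition2p9 (n : nat) (Hn : (3 <= n)%N) :
  (forall B u : 'I_n -> pt, generic_framed B u ->
     exists C, induced_chain B u C /\ generic_chain C /\
       (forall i D, valid D ->
          tangent_at D (B (ord_pred i)) (u (ord_pred i)) ->
          tangent_at D (B i) (u i) -> same_circle D (C i))) /\
  (forall (B u : 'I_n -> pt) (C : 'I_n -> ocirc), generic_framed B u ->
     induced_chain B u C ->
     induced_chain B (fun i => vneg (u i)) (fun i => orev (C i))) /\
  (forall (B u B' u' : 'I_n -> pt) (C C' : 'I_n -> ocirc),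
     generic_framed B u -> generic_framed B' u' ->
     induced_chain B u C -> induced_chain B' u' C' -> chain_equiv C C' ->
     (forall i, B' i = B i) /\ frame_equiv u u') /\
  (forall C : 'I_n -> ocirc, generic_chain C ->
     exists (B u : 'I_n -> pt) (C' : 'I_n -> ocirc),
       generic_framed B u /\ induced_chain B u C' /\ chain_equiv C' C).
Proof.
  (* The construction works for every [n]. *)
  split; [exact: generic_framed_induced_chain|].
  split; [by move=> B u C _; exact: induced_chain_vneg|].
  split; [by move=> B u B' u' C C' HG _; exact: induced_chain_inj|].
  move=> C /generic_chain_induced [B [u [HG HI]]].
  by exists B, u, C; split=> //; split=> //; left.
Qed.
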